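(* Assume the Smoothness Assumption and the Extended KŁ Assumption (see context), and $r>\rho$. Let $y\in\mathcal Y$, $z\in\mathbb R^{d_x}$, let $y(z)$ be any element of $\arg\max_{y'\in\mathcal Y}d_r(y',z)$, and let $y_+(z)=\mathrm{proj}_{\mathcal Y}\big(y+\alpha_y\nabla_yF(x_r(y,z),y)\big)$ with $\alpha_y>0$. Then $$\|x_r(y(z),z)-x_r(y_+(z),z)\|^2\le\varpi\|y-y_+(z)\|^2\quad\text{if }\theta\in[0,\tfrac12],$$ $$\|x_r(y(z),z)-x_r(y_+(z),z)\|^2\le\kappa\|y-y_+(z)\|^{1/\theta}\quad\text{if }\theta\in(\tfrac12,1],$$ where $\varpi=\frac{2(\ell D_{\mathcal Y})^{1-2\theta}}{r-\rho}\cdot\frac{\frac2{\alpha_y^2}+2L_y^2\sigma_2^2+2L_y^2}{\mu^2}$, $\kappa=\frac2{r-\rho}\Big(\frac{\sqrt{\frac2{\alpha_y^2}+2L_y^2\sigma_2^2+2L_y^2}}{\mu}\Big)^{1/\theta}$, and $\sigma_2=2+\frac{L_y}{r-\rho}$.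
   Context: Let $\mathcal X\subseteq\mathbb R^{d_x}$, $\mathcal Y\subseteq\mathbb R^{d_y}$ be nonempty closed convex sets, $\mathbb P$ a distribution on $\Xi$, $f:\mathbb R^{d_x}\times\mathbb R^{d_y}\times\Xi\to\mathbb R$, $F(x,y)=\mathbb E_{\xi\sim\mathbb P}[f(x,y;\xi)]$. Smoothness Assumption: (i) $\mathcal Y$ compact with diameter $D_{\mathcal Y}$; (ii) $\mathbb E|f(x_1,y_1;\xi)-f(x_2,y_2;\xi)|\le\ell(\|x_1-x_2\|+\|y_1-y_2\|)$ on $\mathcal X\times\mathcal Y$; (iii) for all $x,x_i\in\mathcal X$, $y,y_i\in\mathcal Y$: $\mathbb E\|\nabla_xf(x_1,y;\xi)-\nabla_xf(x_2,y;\xi)\|^2\le L_x^2\|x_1-x_2\|^2$, $\mathbb E\|\nabla_xf(x,y_1;\xi)-\nabla_xf(x,y_2;\xi)\|^2\le L_y^2\|y_1-y_2\|^2$, $\mathbb E\|\nabla_yf(x_1,y_1;\xi)-\nabla_yf(x_2,y_2;\xi)\|^2\le L_y^2(\|x_1-x_2\|^2+\|y_1-y_2\|^2)$; (iv) $F(\cdot,y)+\frac\rho2\|\cdot\|^2$ convex on $\mathcal X$ for each $y\in\mathcal Y$; (v) $\mathbb E[\nabla f(x,y;\xi)\mid(x,y)]=\nabla F(x,y)$ with variance bounds $\sigma_x^2,\sigma_y^2$ for the $x$- and $y$-gradients; (vi) $\max_y\min_xF\ge\underline F$. Extended KŁ Assumption: there exist $\mu>0$, $\theta\in[0,1]$ with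 $\mathrm{dist}(0,-\nabla_yF(x,y)+\mathcal N_{\mathcal Y}(y))\ge\mu(\max_{y'\in\mathcal Y}F(x,y')-F(x,y))^\theta$ for all $x\in\mathcal X,y\in\mathcal Y$ ($\mathcal N_{\mathcal Y}$ the normal cone). Notation: $F_r(x,y,z)=F(x,y)+\frac r2\|x-z\|^2$, $x_r(y,z)=\arg\min_{x\in\mathcal X}F_r(x,y,z)$, $d_r(y,z)=\min_{x\in\mathcal X}F_r(x,y,z)$. *)

From HB Require Import structures.
From mathcomp Require Import all_boot all_order all_algebra.
From mathcomp Require Import all_classical all_reals all_analysis.
Set Implicit Arguments. Unset Strict Implicit. Unset Printing Implicit Defensive.
Import Order.TTheory GRing.Theory Num.Theory.
Import numFieldNormedType.Exports.
Local Open Scope classical_set_scope.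
Local Open Scope ring_scope.

Section Defs.
Variable R : realType.

Definition dotv n (v w : 'rV[R]_n) : R := \sum_(i < n) v ord0 i * w ord0 i.
Definition enorm n (v : 'rV[R]_n) : R := Num.sqrt (dotv v v).

Definition convex_setv n (S : set 'rV[R]_n) : Prop :=
  forall a b, S a -> S b -> forall t : R, 0 <= t <= 1 ->
    S ((1 - t) *: a + t *: b).
Definition convex_onv n (S : set 'rV[R]_n) (g : 'rV[R]_n -> R) : Prop :=
  forall a b, S a -> S b -> forall t : R, 0 <= t <= 1 ->
    g ((1 - t) *: a + t *: b) <= (1 - t) * g a + t * g b.

Definition ncone n (S : set 'rV[R]_n) (y : 'rV[R]_n) : set 'rV[R]_n :=
  [set v | forall y', S y' -> dotv v (y' - y) <= 0].

(* dist(0, -g + N_S(y)) *)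
Definition dist0_ncone n (S : set 'rV[R]_n) (g y : 'rV[R]_n) : R :=
  inf [set enorm (v - g) | v in ncone S y].

Definition is_proj n (S : set 'rV[R]_n) (v p : 'rV[R]_n) : Prop :=
  S p /\ forall q, S q -> enorm (v - p) <= enorm (v - q).

Definition diam n (S : set 'rV[R]_n) : R :=
  sup [set enorm (a - b) | a in S & b in S].

(* Power with the convention 0^0 = 0 (used in the KL inequality). *)
Definition klpow (a th : R) : R := if a == 0 then 0 else a `^ th.

Definition has_grad2 dx dy (h : 'rV[R]_dx -> 'rV[R]_dy -> R)
  (gx : 'rV[R]_dx) (gy : 'rV[R]_dy) (x : 'rV[R]_dx) (y : 'rV[R]_dy) : Prop :=
  differentiable (fun p : 'rV[R]_dx * 'rV[R]_dy => h p.1 p.2) (x, y) /\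
  forall p : 'rV[R]_dx * 'rV[R]_dy,
    'd (fun p : 'rV[R]_dx * 'rV[R]_dy => h p.1 p.2) (x, y) p
      = dotv gx p.1 + dotv gy p.2.

Definition Fr dx dy (F : 'rV[R]_dx -> 'rV[R]_dy -> R) (r : R)
  (x : 'rV[R]_dx) (y : 'rV[R]_dy) (z : 'rV[R]_dx) : R :=
  F x y + r / 2 * enorm (x - z) ^+ 2.

Definition is_xr dx dy (X : set 'rV[R]_dx) (F : 'rV[R]_dx -> 'rV[R]_dy -> R)
  (r : R) (y : 'rV[R]_dy) (z x : 'rV[R]_dx) : Prop :=
  X x /\ forall x', X x' -> Fr F r x y z <= Fr F r x' y z.

Definition dr dx dy (X : set 'rV[R]_dx) (F : 'rV[R]_dx -> 'rV[R]_dy -> R)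
  (r : R) (y : 'rV[R]_dy) (z : 'rV[R]_dx) : R :=
  inf [set Fr F r x y z | x in X].

End Defs.

(** The hypothesis r > rho makes F_r(., y, z) (r - rho)-strongly convex, so x_r(., z) is
   Ly/(r - rho)-Lipschitz.  Quadratic growth of F_r(., y(z), z) around its minimiser, together
   with the maximality of y(z) for d_r(., z), bounds (r - rho)/2 |x_r(y(z)) - x_r(y_+)|^2 by the
   gap D = max_Y F(x_+, .) - F(x_+, y_+), where x_+ = x_r(y_+, z).  The projection defining y_+
   exhibits (y - y_+)/alpha + grad_y F(x_r(y, z), y) - grad_y F(x_+, y_+) in
   -grad_y F(x_+, y_+) + N_Y(y_+), whose norm is at most sqrt c |y - y_+| by the Lipschitz
   gradients, so the KL inequality gives mu D^theta <= sqrt c |y - y_+|.  For theta <= 1/2 we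
   write D = D^(1 - 2 theta) (D^theta)^2 with D <= ell D_Y; for theta > 1/2 we raise to 1/theta.
   The deterministic Lipschitz bounds on F and its gradients follow from the stochastic ones
   by Jensen's inequality. *)

From HB Require Import structures.
From mathcomp Require Import all_boot all_order all_algebra.
From mathcomp Require Import all_classical all_reals all_analysis.
From mathcomp Require Import ring lra.
Import Order.TTheory GRing.Theory Num.Theory.
Import numFieldNormedType.Exports.
Local Open Scope classical_set_scope.
Local Open Scope ring_scope.

Set Implicit Arguments. Unset Strict Implicit. Unset Printing Implicit Defensive.

Section Euclidean.
Variables (R : realType) (n : nat).
Implicit Types (u v w : 'rV[R]_n) (a t : R).

Lemma dotvC u v : dotv u v = dotv v u.
Proof. by apply: eq_bigr => i _; rewrite mulrC. Qed.

Lemma dotvDl u v w : dotv (u + v) w = dotv u w + dotv v w.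
Proof. by rewrite /dotv -big_split; apply: eq_bigr => i _; rewrite !mxE mulrDl. Qed.

Lemma dotvZl a u w : dotv (a *: u) w = a * dotv u w.
Proof. by rewrite /dotv mulr_sumr; apply: eq_bigr => i _; rewrite !mxE mulrA. Qed.

Lemma dotvNl u w : dotv (- u) w = - dotv u w.
Proof. by rewrite -scaleN1r dotvZl mulN1r. Qed.

Lemma dotvBl u v w : dotv (u - v) w = dotv u w - dotv v w.
Proof. by rewrite dotvDl dotvNl. Qed.

Lemma dotvDr u v w : dotv w (u + v) = dotv w u + dotv w v.
Proof. by rewrite dotvC dotvDl !(dotvC w). Qed.

Lemma dotvZr a u w : dotv w (a *: u) = a * dotv w u.
Proof. by rewrite dotvC dotvZl dotvC. Qed.

Lemma dotvNr u w : dotv w (- u) = - dotv w u.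
Proof. by rewrite dotvC dotvNl dotvC. Qed.

Lemma dotv0l w : dotv 0 w = 0.
Proof. by rewrite /dotv big1 // => i _; rewrite mxE mul0r. Qed.

Lemma dotv_ge0 u : 0 <= dotv u u.
Proof. by apply: sumr_ge0 => i _; rewrite -expr2 sqr_ge0. Qed.

Lemma enorm_sq u : enorm u ^+ 2 = dotv u u.
Proof. by rewrite /enorm sqr_sqrtr // dotv_ge0. Qed.

Lemma enorm_ge0 u : 0 <= enorm u.
Proof. exact: sqrtr_ge0. Qed.

Lemma enormN u : enorm (- u) = enorm u.
Proof. by rewrite /enorm dotvNl dotvNr opprK. Qed.

Lemma enormB u v : enorm (u - v) = enorm (v - u).
Proof. by rewrite -enormN opprB. Qed.

Lemma enorm0 : enorm (0 : 'rV[R]_n) = 0.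
Proof. by rewrite /enorm dotv0l sqrtr0. Qed.

Lemma enormZ_sq a u : enorm (a *: u) ^+ 2 = a ^+ 2 * enorm u ^+ 2.
Proof. by rewrite !enorm_sq dotvZl dotvZr mulrA -expr2. Qed.

Lemma enorm_le_mx_norm u : enorm u <= Num.sqrt (`|u| ^+ 2 *+ n).
Proof.
rewrite ler_wsqrtr // -[n in _ *+ n]card_ord -sumr_const; apply: ler_sum => i _.
rewrite -expr2 -real_normK ?num_real // lerXn2r ?nnegrE //.
by rewrite [`|u|]mx_normrE; exact: le_bigmax (ord0, i).
Qed.

Lemma dotv_young u v a : 0 < a -> 2 * dotv u v <= a * dotv u u + a^-1 * dotv v v.
Proof.
move=> a_gt0; rewrite /dotv !mulr_sumr -big_split /=; apply: ler_sum => i _.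
have : 0 <= a^-1 * (a * u ord0 i - v ord0 i) ^+ 2.
  by rewrite mulr_ge0 ?invr_ge0 ?sqr_ge0 ?ltW.
suff -> : a^-1 * (a * u ord0 i - v ord0 i) ^+ 2 = a * (u ord0 i * u ord0 i)
  + a^-1 * (v ord0 i * v ord0 i) - 2 * (u ord0 i * v ord0 i) by rewrite subr_ge0.
by field; rewrite gt_eqF.
Qed.

Lemma enormD_sq_le u v : enorm (u + v) ^+ 2 <= 2 * enorm u ^+ 2 + 2 * enorm v ^+ 2.
Proof.
rewrite !enorm_sq dotvDl !dotvDr (dotvC v u).
by have := dotv_young u v ltr01; rewrite invr1 !mul1r; lra.
Qed.

Lemma convex_combE u v t : (1 - t) *: u + t *: v = u + t *: (v - u).
Proof. by apply/rowP => i; rewrite !mxE; ring. Qed.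

Lemma enorm_comb_sq u v t : enorm ((1 - t) *: u + t *: v) ^+ 2 =
  (1 - t) * enorm u ^+ 2 + t * enorm v ^+ 2 - t * (1 - t) * enorm (v - u) ^+ 2.
Proof.
rewrite !enorm_sq /dotv !mulr_sumr -big_split -sumrB /=.
by apply: eq_bigr => i _; rewrite !mxE; ring.
Qed.

Lemma enorm_addZ_sq w u t :
  enorm (w + t *: u) ^+ 2 = enorm w ^+ 2 + 2 * t * dotv w u + t ^+ 2 * enorm u ^+ 2.
Proof.
rewrite !enorm_sq /dotv !mulr_sumr -!big_split /=.
by apply: eq_bigr => i _; rewrite !mxE; ring.
Qed.

End Euclidean.

Section DirectionalDerivative.
Variable R : realType.

Lemma has_grad2_dir_x dx dy (F : 'rV[R]_dx -> 'rV[R]_dy -> R) gx gy x y u :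
  has_grad2 F gx gy x y ->
  (fun t : R => t^-1 * (F (x + t *: u) y - F x y)) @ 0^' --> dotv gx u.
Proof.
case=> dF dFE; set h := fun p : 'rV[R]_dx * 'rV[R]_dy => F p.1 p.2.
have hD : (fun t : R => t^-1 *: ((h \o shift (x, y)) (t *: (u, 0)) - h (x, y)))
    @ 0^' --> 'D_(u, 0) h (x, y) := diff_derivable dF.
rewrite (deriveE _ dF) dFE /= (dotvC gy) dotv0l addr0 in hD.
suff -> : (fun t : R => t^-1 * (F (x + t *: u) y - F x y)) =
  (fun t : R => t^-1 *: ((h \o shift (x, y)) (t *: (u, 0)) - h (x, y))) by [].
by apply/funext => t; rewrite /h /= scaler0 add0r [t *: u + x]addrC.
Qed.

Lemma cvg_le_affine (q : R -> R) (D A B : R) :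
  q @ 0^' --> D -> (forall t, 0 < t <= 1 -> q t <= A + B * t) -> D <= A.
Proof.
move=> qD q_le.
have qD' := cvg_dnbhs_at_right qD.
have affA : (fun t => A + B * t) @ 0^'+ --> A + B * 0.
  apply: cvg_at_right_filter; apply: cvgD; first exact: cvg_cst.
  by apply: cvgM; [exact: cvg_cst|exact: cvg_id].
rewrite mulr0 addr0 in affA.
rewrite -(cvg_lim (@Rhausdorff R) qD') -(cvg_lim (@Rhausdorff R) affA).
apply: ler_lim; [by apply/cvg_ex; exists D|by apply/cvg_ex; exists A|].
near=> t; apply: q_le; apply/andP; split; near: t; first exact: nbhs_right_gt.
by apply: nbhs_right_le; rewrite ltr01.
Unshelve. all: by end_near.
Qed.

End DirectionalDerivative.

Section NormalCone.
Variables (R : realType) (n : nat) (Y : set 'rV[R]_n).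
Hypothesis convY : convex_setv Y.

Lemma is_proj_ncone v p : is_proj Y v p -> ncone Y p (v - p).
Proof.
move=> [Yp p_min] q Yq; set W := dotv (v - p) (q - p); set E := enorm (q - p) ^+ 2.
apply: (cvg_le_affine (B := E / 2) (cvg_cst W)) => t /andP[t_gt0 t_le1] /=.
have Yt : Y ((1 - t) *: p + t *: q) by apply: convY; rewrite ?t_le1 ?ltW.
have := p_min _ Yt.
have -> : v - ((1 - t) *: p + t *: q) = (v - p) + (- t) *: (q - p).
  by apply/rowP => i; rewrite !mxE; ring.
rewrite -ler_sqr ?nnegrE ?enorm_ge0 // enorm_addZ_sq -/E -/W sqrrN => ?.
by rewrite -(ler_pM2l t_gt0); lra.
Qed.

Lemma nconeZ y v a : 0 <= a -> ncone Y y v -> ncone Y y (a *: v).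
Proof. by move=> a_ge0 yv q Yq; rewrite dotvZl mulr_ge0_le0 // yv. Qed.

Lemma dist0_ncone_le g y v : ncone Y y v -> dist0_ncone Y g y <= enorm (v - g).
Proof.
move=> yv; apply: ge_inf; last by exists v.
by exists 0 => _ [v' _ <-]; exact: enorm_ge0.
Qed.

Lemma dist0_ncone_proj_le (alpha : R) y g h yp : 0 < alpha ->
  is_proj Y (y + alpha *: g) yp ->
  dist0_ncone Y h yp <= enorm (alpha^-1 *: (y - yp) + (g - h)).
Proof.
move=> alpha_gt0 ypP.
have vN : ncone Y yp (alpha^-1 *: (y + alpha *: g - yp)).
  by apply: nconeZ (is_proj_ncone ypP); rewrite invr_ge0 ltW.
have -> : alpha^-1 *: (y - yp) + (g - h) = alpha^-1 *: (y + alpha *: g - yp) - h.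
  by apply/rowP => i; rewrite !mxE; field; rewrite gt_eqF.
exact: dist0_ncone_le.
Qed.

End NormalCone.

Lemma compact_enorm_le_diam (R : realType) n (Y : set 'rV[R]_n) a b :
  compact Y -> Y a -> Y b -> enorm (a - b) <= diam Y.
Proof.
move=> cY Ya Yb; have [M [_ YM]] := compact_bounded cY.
have {}YM x : Y x -> `|x| <= M + 1 by move=> Yx; apply: (YM (M + 1)) Yx; rewrite ltrDl.
apply: sup_upper_bound; last by exists a => //; exists b.
split; first by exists (enorm (a - b)), a => //; exists b.
exists (Num.sqrt ((2 * (M + 1)) ^+ 2 *+ n)) => _ [a' Ya' [b' Yb' <-]].
have ab_le : `|a' - b'| <= 2 * (M + 1).
  by apply: le_trans (ler_normB _ _) _; have := YM _ Ya'; have := YM _ Yb'; lra.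
apply: le_trans (enorm_le_mx_norm _) _.
rewrite ler_wsqrtr // ler_wMn2r // lerXn2r // nnegrE //.
exact: le_trans (normr_ge0 _) ab_le.
Qed.

Lemma sup_image_gap (R : realType) (T : Type) (A : set T) (g : T -> R) a K :
  A a -> (forall b, A b -> g b - g a <= K) ->
  (forall b, A b -> g b <= sup [set g b | b in A]) /\ sup [set g b | b in A] - g a <= K.
Proof.
move=> Aa gK; have ub : ubound [set g b | b in A] (g a + K).
  by move=> _ [b Ab <-]; have := gK _ Ab; lra.
split=> [b Ab|]; last by rewrite lerBlDl; apply: ge_sup => //; exists (g a), a.
by apply: sup_upper_bound; [split; [exists (g a), a|exists (g a + K)]|exists b].
Qed.

Section Moments.
Variables (R : realType) (d : measure_display) (T : measurableType d).

Lemma normB_le_integral (mu : {measure set T -> \bar R}) (g1 g2 : T -> R) a1 a2 :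
  mu.-integrable setT (EFin \o g1) -> mu.-integrable setT (EFin \o g2) ->
  (\int[mu]_x (g1 x)%:E = a1%:E)%E -> (\int[mu]_x (g2 x)%:E = a2%:E)%E ->
  (`|a1 - a2|%:E <= \int[mu]_x (`|g1 x - g2 x|)%:E)%E.
Proof.
move=> int1 int2 mean1 mean2.
have -> : (`|a1 - a2|%:E = `|\int[mu]_x ((g1 x)%:E - (g2 x)%:E)|)%E.
  by rewrite integralB_EFin // mean1 mean2.
under [X in (_ <= X)%E]eq_integral do rewrite -abse_EFin EFinB.
apply: le_abse_integral => //.
exact: measurable_int (integrableB measurableT int1 int2).
Qed.

Variable P : probability T R.

Lemma sqr_le_integral_sqr (g : T -> R) a : P.-integrable setT (fun x => (g x)%:E) ->
  (\int[P]_x (g x)%:E = a%:E)%E -> ((a ^+ 2)%:E <= \int[P]_x ((g x) ^+ 2)%:E)%E.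
Proof.
move=> int_g mean_g.
have [->|fin] := eqVneq (\int[P]_x ((g x) ^+ 2)%:E)%E +oo%E; first by rewrite leey.
have mg : measurable_fun setT g.
  by apply/measurable_realfun.measurable_EFinP; exact: measurable_int int_g.
have int_g2 : P.-integrable setT (fun x => ((g x) ^+ 2)%:E).
  apply/integrableP; split.
    by apply/measurable_realfun.measurable_EFinP; exact: measurable_realfun.measurable_funX.
  by under eq_integral do rewrite gee0_abs ?lee_fin ?sqr_ge0 //; rewrite ltey.
(* Jensen's inequality for the square: integrate [2 a g - a^2 <= g^2]. *)
have int_lin : P.-integrable setT (fun x => ((2 * a)%:E * (g x)%:E)%E) by exact: integrableZl.
have int_cst : P.-integrable setT (EFin \o cst (a ^+ 2)) by exact: finite_measure_integrable_cst.
have -> : ((a ^+ 2)%:E = \int[P]_x ((2 * a)%:E * (g x)%:E - (a ^+ 2)%:E))%E.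
  rewrite integralB // integralZl // mean_g integral_cst //.
  set PT := (X in (_ - _ * X)%E); have -> : PT = 1%E by exact: probability_setT.
  by rewrite mule1 -EFinM -EFinB; congr EFin; ring.
apply: le_integral => //; first exact: integrableB.
move=> x _; rewrite -EFinM -EFinB lee_fin.
by have := sqr_ge0 (g x - a); lra.
Qed.

Lemma enorm_sqr_le_integral n (w : T -> 'rV[R]_n) (G : 'rV[R]_n) :
  (forall i, P.-integrable setT (fun x => (w x ord0 i)%:E)) ->
  (forall i, \int[P]_x (w x ord0 i)%:E = (G ord0 i)%:E)%E ->
  ((enorm G ^+ 2)%:E <= \int[P]_x ((enorm (w x)) ^+ 2)%:E)%E.
Proof.
move=> int_w mean_w.
under eq_integral do rewrite enorm_sq /dotv -sumEFin.
rewrite ge0_integral_sum //; first last.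
- by move=> i x _; rewrite lee_fin -expr2 sqr_ge0.
- move=> i; apply/measurable_realfun.measurable_EFinP.
  have mi : measurable_fun setT (fun x => w x ord0 i).
    by apply/measurable_realfun.measurable_EFinP; exact: measurable_int (int_w i).
  exact: measurable_realfun.measurable_funM.
rewrite enorm_sq /dotv -sumEFin; apply: lee_sum => i _.
by rewrite -!expr2; exact: sqr_le_integral_sqr.
Qed.

Lemma enormB_sqr_le_integral n (w1 w2 : T -> 'rV[R]_n) (G1 G2 : 'rV[R]_n) :
  (forall i, P.-integrable setT (fun x => (w1 x ord0 i)%:E)) ->
  (forall i, P.-integrable setT (fun x => (w2 x ord0 i)%:E)) ->
  (forall i, \int[P]_x (w1 x ord0 i)%:E = (G1 ord0 i)%:E)%E ->
  (forall i, \int[P]_x (w2 x ord0 i)%:E = (G2 ord0 i)%:E)%E ->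
  ((enorm (G1 - G2) ^+ 2)%:E <= \int[P]_x ((enorm (w1 x - w2 x)) ^+ 2)%:E)%E.
Proof.
move=> int1 int2 mean1 mean2.
have coordB i : (fun x => ((w1 x - w2 x) ord0 i)%:E) =
    (fun x => (w1 x ord0 i)%:E - (w2 x ord0 i)%:E)%E.
  by apply/funext => x; rewrite !mxE EFinB.
apply: (enorm_sqr_le_integral (w := fun x => w1 x - w2 x)) => i.
  by rewrite coordB; exact: integrableB.
by rewrite coordB integralB // mean1 mean2 !mxE EFinB.
Qed.

End Moments.

Section StochasticModel.
Variables (R : realType) (d : measure_display) (T : measurableType d) (P : probability T R).
Variables (dx dy : nat) (X : set 'rV[R]_dx) (Y : set 'rV[R]_dy).
Variables (f : 'rV[R]_dx -> 'rV[R]_dy -> T -> R) (F : 'rV[R]_dx -> 'rV[R]_dy -> R).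
Variables (gfx : 'rV[R]_dx -> 'rV[R]_dy -> T -> 'rV[R]_dx)
  (gfy : 'rV[R]_dx -> 'rV[R]_dy -> T -> 'rV[R]_dy).
Variables (gFx : 'rV[R]_dx -> 'rV[R]_dy -> 'rV[R]_dx)
  (gFy : 'rV[R]_dx -> 'rV[R]_dy -> 'rV[R]_dy).
Variables (ell Ly : R).

Hypothesis int_f : forall x y, X x -> Y y -> P.-integrable setT (fun xi => (f x y xi)%:E).
Hypothesis int_gfx : forall x y, X x -> Y y -> forall i,
  P.-integrable setT (fun xi => (gfx x y xi ord0 i)%:E).
Hypothesis int_gfy : forall x y, X x -> Y y -> forall i,
  P.-integrable setT (fun xi => (gfy x y xi ord0 i)%:E).
Hypothesis mean_f : forall x y, X x -> Y y -> (\int[P]_xi (f x y xi)%:E = (F x y)%:E)%E.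
Hypothesis mean_gfx : forall x y, X x -> Y y -> forall i,
  (\int[P]_xi (gfx x y xi ord0 i)%:E = (gFx x y ord0 i)%:E)%E.
Hypothesis mean_gfy : forall x y, X x -> Y y -> forall i,
  (\int[P]_xi (gfy x y xi ord0 i)%:E = (gFy x y ord0 i)%:E)%E.
Hypothesis f_lip : forall x1 x2 y1 y2, X x1 -> X x2 -> Y y1 -> Y y2 ->
  (\int[P]_xi (`|f x1 y1 xi - f x2 y2 xi|)%:E
    <= (ell * (enorm (x1 - x2) + enorm (y1 - y2)))%:E)%E.
Hypothesis gfx_lip_y : forall x y1 y2, X x -> Y y1 -> Y y2 ->
  (\int[P]_xi ((enorm (gfx x y1 xi - gfx x y2 xi)) ^+ 2)%:E
    <= (Ly ^+ 2 * enorm (y1 - y2) ^+ 2)%:E)%E.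
Hypothesis gfy_lip : forall x1 x2 y1 y2, X x1 -> X x2 -> Y y1 -> Y y2 ->
  (\int[P]_xi ((enorm (gfy x1 y1 xi - gfy x2 y2 xi)) ^+ 2)%:E
    <= (Ly ^+ 2 * (enorm (x1 - x2) ^+ 2 + enorm (y1 - y2) ^+ 2))%:E)%E.

Lemma F_lipschitz x1 x2 y1 y2 : X x1 -> X x2 -> Y y1 -> Y y2 ->
  `|F x1 y1 - F x2 y2| <= ell * (enorm (x1 - x2) + enorm (y1 - y2)).
Proof.
move=> X1 X2 Y1 Y2; rewrite -lee_fin; apply: le_trans (f_lip X1 X2 Y1 Y2).
exact: normB_le_integral (int_f X1 Y1) (int_f X2 Y2) (mean_f X1 Y1) (mean_f X2 Y2).
Qed.

Lemma gFx_lipschitz_y x y1 y2 : X x -> Y y1 -> Y y2 ->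
  enorm (gFx x y1 - gFx x y2) ^+ 2 <= Ly ^+ 2 * enorm (y1 - y2) ^+ 2.
Proof.
move=> Xx Y1 Y2; rewrite -lee_fin; apply: le_trans (gfx_lip_y Xx Y1 Y2).
by apply: enormB_sqr_le_integral;
  [exact: int_gfx|exact: int_gfx|exact: mean_gfx|exact: mean_gfx].
Qed.

Lemma gFy_lipschitz x1 x2 y1 y2 : X x1 -> X x2 -> Y y1 -> Y y2 ->
  enorm (gFy x1 y1 - gFy x2 y2) ^+ 2 <=
    Ly ^+ 2 * (enorm (x1 - x2) ^+ 2 + enorm (y1 - y2) ^+ 2).
Proof.
move=> X1 X2 Y1 Y2; rewrite -lee_fin; apply: le_trans (gfy_lip X1 X2 Y1 Y2).
by apply: enormB_sqr_le_integral;
  [exact: int_gfy|exact: int_gfy|exact: mean_gfy|exact: mean_gfy].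
Qed.

End StochasticModel.

Lemma is_xr_dr (R : realType) dx dy (X : set 'rV[R]_dx) (F : 'rV[R]_dx -> 'rV[R]_dy -> R)
    r y z x :
  is_xr X F r y z x -> dr X F r y z = Fr F r x y z.
Proof.
case=> Xx x_min; apply/eqP; rewrite eq_le; apply/andP; split.
  apply: ge_inf; last by exists x.
  by exists (Fr F r x y z) => _ [x' Xx' <-]; exact: x_min.
apply: lb_le_inf; first by exists (Fr F r x y z), x.
by move=> _ [x' Xx' <-]; exact: x_min.
Qed.

Lemma ascent_const_ge0 (R : realType) (alpha L s : R) :
  0 <= 2 / alpha ^+ 2 + 2 * L ^+ 2 * s ^+ 2 + 2 * L ^+ 2.
Proof.
have : 0 <= 2 / alpha ^+ 2 by rewrite divr_ge0 ?sqr_ge0.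
by have := mulr_ge0 (sqr_ge0 L) (sqr_ge0 s); have := sqr_ge0 L; lra.
Qed.

Section ProximalMap.
Variables (R : realType) (dx dy : nat) (X : set 'rV[R]_dx) (Y : set 'rV[R]_dy).
Variables (F : 'rV[R]_dx -> 'rV[R]_dy -> R).
Variables (gFx : 'rV[R]_dx -> 'rV[R]_dy -> 'rV[R]_dx) (gFy : 'rV[R]_dx -> 'rV[R]_dy -> 'rV[R]_dy).
Variables (rho r : R) (z : 'rV[R]_dx).
Hypothesis convX : convex_setv X.
Hypothesis gradF : forall x y, X x -> Y y -> has_grad2 F (gFx x y) (gFy x y) x y.
Hypothesis wconvF :
  forall y, Y y -> convex_onv X (fun x => F x y + rho / 2 * enorm x ^+ 2).

Lemma weakly_convex_grad_le x1 x2 y : X x1 -> X x2 -> Y y ->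
  dotv (gFx x1 y) (x2 - x1) <= F x2 y - F x1 y + rho / 2 * enorm (x2 - x1) ^+ 2.
Proof.
move=> X1 X2 Yy; set E := enorm (x2 - x1) ^+ 2.
apply: (cvg_le_affine (B := - (rho / 2 * E)) (has_grad2_dir_x (u := x2 - x1) (gradF X1 Yy))).
move=> t /andP[t_gt0 t_le1]; rewrite ler_pdivrMl //.
have := wconvF Yy X1 X2 (t := t); rewrite t_le1 ltW // => /(_ isT).
rewrite enorm_comb_sq convex_combE -/E; lra.
Qed.

Lemma is_xr_first_order y xs x : Y y -> is_xr X F r y z xs -> X x ->
  0 <= dotv (gFx xs y) (x - xs) + r * dotv (xs - z) (x - xs).
Proof.
move=> Yy [Xxs xs_min] Xx; set E := enorm (x - xs) ^+ 2; set W := dotv (xs - z) (x - xs).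
suff : - dotv (gFx xs y) (x - xs) <= r * W by lra.
apply: (cvg_le_affine (B := r / 2 * E) (cvgN (has_grad2_dir_x (u := x - xs) (gradF Xxs Yy)))).
move=> t /andP[t_gt0 t_le1]; rewrite opprfctE /= -mulrN ler_pdivrMl //.
have Xt : X (xs + t *: (x - xs)) by rewrite -convex_combE; apply: convX; rewrite ?t_le1 ?ltW.
have := xs_min _ Xt; rewrite /Fr.
have -> : xs + t *: (x - xs) - z = (xs - z) + t *: (x - xs).
  by apply/rowP => i; rewrite !mxE; ring.
rewrite enorm_addZ_sq -/E -/W; lra.
Qed.

Lemma is_xr_growth y xs x : Y y -> is_xr X F r y z xs -> X x ->
  (r - rho) / 2 * enorm (x - xs) ^+ 2 <= Fr F r x y z - Fr F r xs y z.
Proof.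
move=> Yy xsP Xx.
have := is_xr_first_order Yy xsP Xx; have := weakly_convex_grad_le xsP.1 Xx Yy.
rewrite /Fr; have -> : x - z = (xs - z) + 1 *: (x - xs) by apply/rowP => i; rewrite !mxE; ring.
rewrite enorm_addZ_sq expr1n mulr1 mul1r; lra.
Qed.

Lemma is_xr_strongly_monotone y1 y2 x1 x2 : Y y1 -> Y y2 ->
  is_xr X F r y1 z x1 -> is_xr X F r y2 z x2 ->
  (r - rho) * enorm (x2 - x1) ^+ 2 <= dotv (gFx x1 y1 - gFx x1 y2) (x2 - x1).
Proof.
move=> Y1 Y2 x1P x2P; have [X1 X2] := (x1P.1, x2P.1).
(* Add the optimality conditions at x1 and x2 to the two weak-convexity inequalities at y2. *)
have opt1 := is_xr_first_order Y1 x1P X2.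
have opt2 := is_xr_first_order Y2 x2P X1.
have wc1 := weakly_convex_grad_le X1 X2 Y2.
have wc2 := weakly_convex_grad_le X2 X1 Y2.
rewrite -(opprB x2 x1) !dotvNr enormN in opt2 wc2.
have shift_z : x2 - z = (x1 - z) + (x2 - x1) by apply/rowP => i; rewrite !mxE; ring.
rewrite shift_z dotvDl -enorm_sq in opt2; rewrite dotvBl.
lra.
Qed.

Lemma is_xr_lipschitz y1 y2 x1 x2 : rho < r -> Y y1 -> Y y2 ->
  is_xr X F r y1 z x1 -> is_xr X F r y2 z x2 ->
  (r - rho) ^+ 2 * enorm (x1 - x2) ^+ 2 <= enorm (gFx x1 y1 - gFx x1 y2) ^+ 2.
Proof.
rewrite -subr_gt0 => m_gt0 Y1 Y2 x1P x2P.
have minv_gt0 : 0 < (r - rho)^-1 by rewrite invr_gt0.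
have := dotv_young (gFx x1 y1 - gFx x1 y2) (x2 - x1) minv_gt0.
have := is_xr_strongly_monotone Y1 Y2 x1P x2P.
rewrite invrK -!enorm_sq (enormB x1 x2).
set A := enorm (gFx _ _ - _) ^+ 2; set E := enorm (x2 - x1) ^+ 2 => mono young.
have : (r - rho) * E <= (r - rho)^-1 * A by lra.
by move/(ler_wpM2l (ltW m_gt0)); rewrite mulrA -expr2 mulVKf ?gt_eqF.
Qed.

Lemma argmax_xr_sqr_le y0 yp xa xb S : rho < r -> Y y0 -> Y yp ->
  (forall y, Y y -> dr X F r y z <= dr X F r y0 z) ->
  is_xr X F r y0 z xa -> is_xr X F r yp z xb -> F xb y0 <= S ->
  enorm (xa - xb) ^+ 2 <= 2 / (r - rho) * (S - F xb yp).
Proof.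
rewrite -subr_gt0 => m_gt0 Y0 Yp y0_max xaP xbP le_S.
rewrite -(ler_pM2l (_ : 0 < (r - rho) / 2)) ?divr_gt0 //.
have -> : (r - rho) / 2 * (2 / (r - rho) * (S - F xb yp)) = S - F xb yp.
  by field; rewrite gt_eqF.
have := is_xr_growth Y0 xaP xbP.1; have := y0_max _ Yp.
by rewrite (is_xr_dr xaP) (is_xr_dr xbP) enormB /Fr; lra.
Qed.

Variable Ly : R.
Hypothesis convY : convex_setv Y.
Hypothesis gFx_lip : forall x y1 y2, X x -> Y y1 -> Y y2 ->
  enorm (gFx x y1 - gFx x y2) ^+ 2 <= Ly ^+ 2 * enorm (y1 - y2) ^+ 2.
Hypothesis gFy_lip : forall x1 x2 y1 y2, X x1 -> X x2 -> Y y1 -> Y y2 ->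
  enorm (gFy x1 y1 - gFy x2 y2) ^+ 2 <=
    Ly ^+ 2 * (enorm (x1 - x2) ^+ 2 + enorm (y1 - y2) ^+ 2).

Lemma proj_ascent_residual_le alpha s y yp xy xb :
  0 <= Ly -> rho < r -> 0 < alpha -> Ly / (r - rho) <= s -> Y y ->
  is_xr X F r y z xy -> is_proj Y (y + alpha *: gFy xy y) yp -> is_xr X F r yp z xb ->
  dist0_ncone Y (gFy xb yp) yp <=
    Num.sqrt (2 / alpha ^+ 2 + 2 * Ly ^+ 2 * s ^+ 2 + 2 * Ly ^+ 2) * enorm (y - yp).
Proof.
move=> Ly_ge0 rho_lt_r alpha_gt0 Ly_le_s Yy xyP ypP xbP.
have m_gt0 : 0 < r - rho by rewrite subr_gt0.
have [Xxy Xxb Yyp] := And3 xyP.1 xbP.1 ypP.1; set D := enorm (y - yp).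
have x_le : enorm (xy - xb) ^+ 2 <= s ^+ 2 * D ^+ 2.
  have lip := le_trans (is_xr_lipschitz rho_lt_r Yy Yyp xyP xbP) (gFx_lip Xxy Yy Yyp).
  have Lym_ge0 : 0 <= Ly / (r - rho) by rewrite divr_ge0 // ltW.
  have s_sq : (Ly / (r - rho)) ^+ 2 <= s ^+ 2.
    by rewrite ler_sqr ?nnegrE // (le_trans Lym_ge0 Ly_le_s).
  apply: le_trans (ler_wpM2r (sqr_ge0 D) s_sq).
  by rewrite expr_div_n mulrAC ler_pdivlMr ?exprn_gt0 // mulrC.
have g_le := gFy_lip Xxy Xxb Yy Yyp; rewrite -/D in g_le.
apply: le_trans (dist0_ncone_proj_le convY (gFy xb yp) alpha_gt0 ypP) _.
rewrite -ler_sqr ?nnegrE ?enorm_ge0 ?mulr_ge0 ?sqrtr_ge0 //.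
rewrite exprMn (sqr_sqrtr (ascent_const_ge0 alpha Ly s)).
apply: le_trans (enormD_sq_le _ _) _; rewrite enormZ_sq -/D exprVn.
have := ler_wpM2l (sqr_ge0 Ly) x_le; lra.
Qed.

End ProximalMap.

Section KLErrorBound.
Variable R : realType.

Lemma klpow_le_sqr (D B c mu theta e : R) : 0 <= D <= B -> 0 <= c -> 0 < mu ->
  0 <= theta <= 1 / 2 -> 0 <= e -> mu * klpow D theta <= Num.sqrt c * e ->
  D <= B `^ (1 - 2 * theta) * (c / mu ^+ 2) * e ^+ 2.
Proof.
move=> /andP[D_ge0 D_le_B] c_ge0 mu_gt0 /andP[_ theta_le] e_ge0.
have [-> _|D_neq0] := eqVneq D 0.
  by apply: mulr_ge0; [apply: mulr_ge0|]; rewrite ?powR_ge0 ?divr_ge0 ?sqr_ge0.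
have D_gt0 : 0 < D by rewrite lt_def D_neq0.
rewrite /klpow (negbTE D_neq0); set p := D `^ theta => p_le.
have D_eq : D = D `^ (1 - 2 * theta) * p ^+ 2.
  rewrite -{1}(powRr1 D_ge0) expr2 /p -!powRD ?D_neq0 ?implybT //.
  by congr (_ `^ _); ring.
have p_sq : p ^+ 2 <= c / mu ^+ 2 * e ^+ 2.
  rewrite mulrAC ler_pdivlMr ?exprn_gt0 // mulrC -exprMn -(sqr_sqrtr c_ge0) -exprMn.
  by rewrite ler_sqr ?nnegrE ?mulr_ge0 ?powR_ge0 ?sqrtr_ge0 // ltW.
rewrite D_eq -mulrA ler_pM ?powR_ge0 ?sqr_ge0 //.
by rewrite ge0_ler_powR ?nnegrE ?(le_trans D_ge0 D_le_B) //; lra.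
Qed.

Lemma klpow_le_powR (D s mu theta e : R) : 0 <= D -> 0 <= s -> 0 < mu ->
  0 < theta -> 0 <= e -> mu * klpow D theta <= s * e ->
  D <= (s / mu) `^ theta^-1 * e `^ theta^-1.
Proof.
move=> D_ge0 s_ge0 mu_gt0 theta_gt0 e_ge0.
have [-> _|D_neq0] := eqVneq D 0; first by rewrite mulr_ge0 ?powR_ge0.
rewrite /klpow (negbTE D_neq0); set p := D `^ theta => p_le.
have -> : D = p `^ theta^-1 by rewrite /p -powRrM mulfV ?gt_eqF // powRr1.
have smu_ge0 : 0 <= s / mu by rewrite divr_ge0 // ltW.
rewrite -powRM // ge0_ler_powR ?nnegrE ?invr_ge0 ?powR_ge0 ?(mulr_ge0 smu_ge0)
  ?(ltW theta_gt0) //.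
by rewrite mulrAC ler_pdivlMr // mulrC.
Qed.

End KLErrorBound.

Unset Implicit Arguments. Set Strict Implicit.

Theorem lemmaA7 (R : realType) (dx dy : nat)
  (d : measure_display) (T : measurableType d) (P : probability T R)
  (X : set 'rV[R]_dx) (Y : set 'rV[R]_dy)
  (f : 'rV[R]_dx -> 'rV[R]_dy -> T -> R)
  (gfx : 'rV[R]_dx -> 'rV[R]_dy -> T -> 'rV[R]_dx)
  (gfy : 'rV[R]_dx -> 'rV[R]_dy -> T -> 'rV[R]_dy)
  (F : 'rV[R]_dx -> 'rV[R]_dy -> R)
  (gFx : 'rV[R]_dx -> 'rV[R]_dy -> 'rV[R]_dx)
  (gFy : 'rV[R]_dx -> 'rV[R]_dy -> 'rV[R]_dy)
  (DY ell Lx Ly rho sigx sigy Flow mu theta r alpha : R) :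
  (* X, Y nonempty closed convex *)
  X !=set0 -> closed X -> convex_setv X ->
  Y !=set0 -> closed Y -> convex_setv Y ->
  (* (i) Y compact with diameter DY *)
  compact Y -> DY = diam Y ->
  (* the stochastic model: f(x,y;.) and its gradients are integrable,
     f(.,.;xi) is differentiable with partial gradients gfx, gfy,
     F = E f and F is differentiable with partial gradients gFx, gFy *)
  (forall x y, X x -> Y y -> P.-integrable setT (fun xi => (f x y xi)%:E)) ->
  (forall x y, X x -> Y y -> forall i,
     P.-integrable setT (fun xi => (gfx x y xi ord0 i)%:E)) ->
  (forall x y, X x -> Y y -> forall i,
     P.-integrable setT (fun xi => (gfy x y xi ord0 i)%:E)) ->
  (forall x y xi, X x -> Y y ->
     has_grad2 (fun x' y' => f x' y' xi) (gfx x y xi) (gfy x y xi) x y) ->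
  (forall x y, X x -> Y y -> (\int[P]_xi (f x y xi)%:E = (F x y)%:E)%E) ->
  (forall x y, X x -> Y y -> has_grad2 F (gFx x y) (gFy x y) x y) ->
  (* (ii) *)
  0 <= ell ->
  (forall x1 x2 y1 y2, X x1 -> X x2 -> Y y1 -> Y y2 ->
     (\int[P]_xi (`|f x1 y1 xi - f x2 y2 xi|)%:E
       <= (ell * (enorm (x1 - x2) + enorm (y1 - y2)))%:E)%E) ->
  (* (iii) *)
  0 <= Lx -> 0 <= Ly ->
  (forall x1 x2 y, X x1 -> X x2 -> Y y ->
     (\int[P]_xi ((enorm (gfx x1 y xi - gfx x2 y xi)) ^+ 2)%:E
       <= (Lx ^+ 2 * enorm (x1 - x2) ^+ 2)%:E)%E) ->
  (forall x y1 y2, X x -> Y y1 -> Y y2 ->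
     (\int[P]_xi ((enorm (gfx x y1 xi - gfx x y2 xi)) ^+ 2)%:E
       <= (Ly ^+ 2 * enorm (y1 - y2) ^+ 2)%:E)%E) ->
  (forall x1 x2 y1 y2, X x1 -> X x2 -> Y y1 -> Y y2 ->
     (\int[P]_xi ((enorm (gfy x1 y1 xi - gfy x2 y2 xi)) ^+ 2)%:E
       <= (Ly ^+ 2 * (enorm (x1 - x2) ^+ 2 + enorm (y1 - y2) ^+ 2))%:E)%E) ->
  (* (iv) rho-weak convexity in x *)
  (forall y, Y y -> convex_onv X (fun x => F x y + rho / 2 * enorm x ^+ 2)) ->
  (* (v) unbiasedness (E[grad f] = grad F) and variance bounds *)
  (forall x y, X x -> Y y -> forall i,
     (\int[P]_xi (gfx x y xi ord0 i)%:E = (gFx x y ord0 i)%:E)%E) ->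
  (forall x y, X x -> Y y -> forall i,
     (\int[P]_xi (gfy x y xi ord0 i)%:E = (gFy x y ord0 i)%:E)%E) ->
  0 <= sigx -> 0 <= sigy ->
  (forall x y, X x -> Y y ->
     (\int[P]_xi ((enorm (gfx x y xi - gFx x y)) ^+ 2)%:E <= (sigx ^+ 2)%:E)%E) ->
  (forall x y, X x -> Y y ->
     (\int[P]_xi ((enorm (gfy x y xi - gFy x y)) ^+ 2)%:E <= (sigy ^+ 2)%:E)%E) ->
  (* (vi) max_y min_x F >= Flow *)
  (exists2 y, Y y & forall x, X x -> Flow <= F x y) ->
  (* Extended KL assumption *)
  0 < mu -> 0 <= theta <= 1 ->
  (forall x y, X x -> Y y ->
     mu * klpow (sup [set F x y' | y' in Y] - F x y) theta
       <= dist0_ncone Y (gFy x y) y) ->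
  (* the lemma's data *)
  rho < r -> 0 < alpha ->
  forall (y : 'rV[R]_dy) (z : 'rV[R]_dx) (yz yp xy xa xb : _),
  Y y ->
  (* yz = y(z) in argmax_{y' in Y} d_r(y', z) *)
  Y yz -> (forall y', Y y' -> dr X F r y' z <= dr X F r yz z) ->
  (* xy = x_r(y,z), yp = y_+(z) = proj_Y (y + alpha grad_y F(x_r(y,z), y)) *)
  is_xr X F r y z xy ->
  is_proj Y (y + alpha *: gFy xy y) yp ->
  (* xa = x_r(y(z), z), xb = x_r(y_+(z), z) *)
  is_xr X F r yz z xa -> is_xr X F r yp z xb ->
  let sigma2 := 2 + Ly / (r - rho) in
  let c := 2 / alpha ^+ 2 + 2 * Ly ^+ 2 * sigma2 ^+ 2 + 2 * Ly ^+ 2 in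
  let varpi := 2 * (ell * DY) `^ (1 - 2 * theta) / (r - rho) * (c / mu ^+ 2) in
  let kappa := 2 / (r - rho) * (Num.sqrt c / mu) `^ (theta^-1) in
  (theta <= 1 / 2 -> enorm (xa - xb) ^+ 2 <= varpi * enorm (y - yp) ^+ 2) /\
  (1 / 2 < theta -> enorm (xa - xb) ^+ 2 <= kappa * enorm (y - yp) `^ (theta^-1)).
Proof.
move=> _ _ convX _ _ convY cY -> int_f int_gfx int_gfy _ mean_f gradF ell_ge0 f_lip _ Ly_ge0 _
  gfx_lip gfy_lip wconvF mean_gfx mean_gfy _ _ _ _ _ mu_gt0 /andP[theta_ge0 _] KL
  rho_lt_r alpha_gt0 y z yz yp xy xa xb Yy Yyz yz_max xyP ypP xaP xbP sigma2 c varpi kappa.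
have [Xxb Yyp] := (xbP.1, ypP.1).
have F_osc b : Y b -> F xb b - F xb yp <= ell * diam Y.
  move=> Yb; have := F_lipschitz int_f mean_f f_lip Xxb Xxb Yb Yyp.
  rewrite subrr enorm0 add0r => /(le_trans (ler_norm _))/le_trans; apply.
  by rewrite ler_wpM2l // compact_enorm_le_diam.
have [le_sup sup_gap] := sup_image_gap Yyp F_osc.
set S := sup _ in le_sup sup_gap.
have gap_bnd : 0 <= S - F xb yp <= ell * diam Y by rewrite subr_ge0 le_sup.
have xab_le :=
  argmax_xr_sqr_le convX gradF wconvF rho_lt_r Yyz Yyp yz_max xaP xbP (le_sup _ Yyz).
have residual : mu * klpow (S - F xb yp) theta <= Num.sqrt c * enorm (y - yp).
  apply: le_trans (KL _ _ Xxb Yyp) (proj_ascent_residual_le convX gradF wconvF convY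
    (gFx_lipschitz_y int_gfx mean_gfx gfx_lip) (gFy_lipschitz int_gfy mean_gfy gfy_lip)
    (s := sigma2) Ly_ge0 rho_lt_r alpha_gt0 _ Yy xyP ypP xbP).
  by rewrite /sigma2 ler_wpDl.
have m2_ge0 : 0 <= 2 / (r - rho) by rewrite divr_ge0 // ltW // subr_gt0.
split=> theta_le; apply: (le_trans xab_le).
- have theta_bnd : 0 <= theta <= 1 / 2 by rewrite theta_ge0 theta_le.
  have := klpow_le_sqr gap_bnd (ascent_const_ge0 _ _ _) mu_gt0 theta_bnd (enorm_ge0 _) residual.
  move/(ler_wpM2l m2_ge0)/le_trans; apply.
  by rewrite le_eqVlt /varpi /c; apply/orP; left; apply/eqP; ring.
- have theta_gt0 : 0 < theta by apply: le_lt_trans theta_le; rewrite divr_ge0.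
  have [gap_ge0 _] := andP gap_bnd.
  have := klpow_le_powR gap_ge0 (sqrtr_ge0 c) mu_gt0 theta_gt0 (enorm_ge0 _) residual.
  by move/(ler_wpM2l m2_ge0); rewrite mulrA.
Qed.
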